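(* Let $n\ge1$ and let $\Sigma=\begin{bmatrix}\Sigma_{11}&\Sigma_{12}\\\Sigma_{12}&\Sigma_{22}\end{bmatrix}$ be a positive definite $2\times2$ matrix with $cn\le\lambda_{\min}(\Sigma)\le\lambda_{\max}(\Sigma)\le Cn$ for constants $0<c\le C$. Let $Z\sim N(\mu,\Sigma)$ with $\mu=(\mu_1,\mu_2)$, let $r\ge1$ and $t=r\sqrt n$. Then $$\mathbb P\big(Z\in(-\infty,\mu_1-t]\times(-\infty,\mu_2-t]\big)\ge\alpha_r(c,C):=\big(\Phi(a)-\Phi(2a)\big)\,\Phi\!\Big(\frac{a(1+2\rho_0)}{\sqrt{1-\rho_0^2}}\Big),$$ where $a=-r/\sqrt c$ and $\rho_0=\sqrt{1-(c/C)^2}$.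
   Context: $\Phi(t)=\frac1{\sqrt{2\pi}}\int_{-\infty}^te^{-x^2/2}dx$ is the standard normal distribution function; $\lambda_{\min},\lambda_{\max}$ are the smallest and largest eigenvalues; $N(\mu,\Sigma)$ is the bivariate Gaussian with mean $\mu$ and covariance $\Sigma$. *)

From HB Require Import structures.
From mathcomp Require Import all_boot all_order all_algebra.
From mathcomp Require Import all_classical all_reals all_analysis.
Set Implicit Arguments. Unset Strict Implicit. Unset Printing Implicit Defensive.
Import Order.TTheory GRing.Theory Num.Theory.
Local Open Scope classical_set_scope.
Local Open Scope ring_scope.

Definition Phi {R : realType} (t : R) : R :=
  fine (normal_prob 0 1 `]-oo, t]).

Definition vec2 {R : realType} (z : R * R) : 'rV[R]_2 :=
  \row_(i < 2) (if i == ord0 then z.1 else z.2).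

Definition bivariate_normal_pdf {R : realType} (mu : 'rV[R]_2) (Sigma : 'M[R]_2)
    (z : R * R) : R :=
  let v := vec2 z - mu in
  expR (- ((v *m invmx Sigma *m v^T) ord0 ord0) / 2)
    / (pi *+ 2 * Num.sqrt (\det Sigma)).

Definition bivariate_normal_prob {R : realType} (mu : 'rV[R]_2) (Sigma : 'M[R]_2)
    (A : set (R * R)) : \bar R :=
  (\int[((@lebesgue_measure R) \x (@lebesgue_measure R))%E]_(z in A)
      (bivariate_normal_pdf mu Sigma z)%:E)%E.

Definition posdef {R : realType} (Sigma : 'M[R]_2) : Prop :=
  Sigma^T = Sigma /\ forall v : 'rV[R]_2, v != 0 -> 0 < (v *m Sigma *m v^T) ord0 ord0.

From HB Require Import structures.
From mathcomp Require Import all_boot all_order all_algebra.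
From mathcomp Require Import all_classical all_reals all_analysis.
From mathcomp Require Import ring lra measurable_realfun.
Set Implicit Arguments.
Unset Strict Implicit.
Unset Printing Implicit Defensive.
Import Order.TTheory GRing.Theory Num.Theory.
Import numFieldNormedType.Exports.
Local Open Scope classical_set_scope.
Local Open Scope ring_scope.

(* Write Z = (X, Y).  Given X = x, Y is normal with mean mu2 + beta (x - mu1),
   beta = Sigma12 / Sigma11, and variance s^2 = det Sigma / Sigma11, so by Tonelli
   the probability of the quadrant is the integral over x <= mu1 - t of the density
   of X times Phi ((-t - beta (x - mu1)) / s).  Keep only the window
   mu1 + 2 a sigma1 < x <= mu1 + a sigma1 (sigma1^2 = Sigma11): it has X-probability
   Phi a - Phi (2 a), and lies below mu1 - t since Sigma11 >= c n.  The eigenvalue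
   bounds give sqrt (c n) (c/C) <= s and |beta| sigma1 <= rho0 s / (c/C), so on the
   window the conditional threshold is at least a (1 + 2 rho0) / (c/C), and
   c/C = sqrt (1 - rho0^2). *)

Section normal_cdf.
Variable R : realType.
Implicit Types m s x y : R.

Lemma normal_probNy m s y : 0 < s ->
  normal_prob m s `]-oo, y] = (Phi ((y - m) / s))%:E.
Proof.
move=> s_gt0; pose F x := (x - m) / s.
have F'E : (F^`() = cst s^-1)%classic.
  apply/funext => x; rewrite derive1E deriveM// deriveD// derive_cst scaler0.
  by rewrite add0r derive_id derive_cst addr0 scaler1.
have cF : continuous F.
  by move=> x; apply: cvgM; [apply: cvgB; [exact: cvg_id|exact: cvg_cst]|exact: cvg_cst].
rewrite /Phi fineK ?fin_num_measure // (_ : (y - m) / s = F y) //.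
rewrite /normal_prob (@increasing_ge0_integration_by_substitutionNy _ F) ?F'E.
- apply: eq_integral => x _; congr EFin.
  rewrite /= !normal_pdfE ?oner_neq0 ?gt_eqF// /normal_peak /normal_fun /F.
  have -> : Num.sqrt (s ^+ 2 * pi *+ 2) = s * Num.sqrt (1 ^+ 2 * pi *+ 2).
    by rewrite expr1n mul1r -mulrnAr sqrtrM ?sqr_ge0// sqrtr_sqr gtr0_norm.
  rewrite invfM [RHS]mulrC mulrA; congr (_ * _ * expR _).
  by field; rewrite gt_eqF.
- by move=> x z _ _ xz; rewrite /F ltr_pM2r ?invr_gt0// ltrBlDr subrK.
- by move=> x _; exact: cvg_cst.
- exact: is_cvg_cst.
- exact: cvg_cst.
- split; last by apply: cvg_at_left_filter; exact: cF.
  by move=> x _; apply: derivableM => //; apply: derivableB.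
- by apply/gt0_cvgMlNy; [rewrite invr_gt0|exact: cvg_addrr_Ny].
- exact/continuous_subspaceT/continuous_normal_pdf/oner_neq0.
- by move=> x _; exact: normal_pdf_ge0.
Qed.

Lemma Phi_ge0 x : 0 <= Phi x.
Proof. by rewrite /Phi fine_ge0 // measure_ge0. Qed.

Lemma le_Phi x y : x <= y -> Phi x <= Phi y.
Proof.
move=> xy; rewrite /Phi fine_le ?fin_num_measure //.
apply: le_measure; rewrite ?inE //.
by move=> z /=; rewrite !in_itv /= => /le_trans; apply.
Qed.

Lemma normal_prob_itvoc m s x y : 0 < s -> x <= y ->
  normal_prob m s `]x, y] = (Phi ((y - m) / s) - Phi ((x - m) / s))%:E.
Proof.
move=> s_gt0 xy.
have : normal_prob m s `]-oo, y] =
    (normal_prob m s `]-oo, x] + normal_prob m s `]x, y])%E.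
  rewrite -measureU //; last first.
    apply/seteqP; split => // z /= []; rewrite !in_itv /= => /le_lt_trans h.
    by move=> /andP[/h]; rewrite ltxx.
  by rewrite -(@itv_bndbnd_setU _ _ _ (BRight x)) // bnd_simp.
rewrite !normal_probNy // -[normal_prob _ _ _](@fineK _) ?fin_num_measure //.
by rewrite -EFinD => -[h]; congr EFin; lra.
Qed.

Lemma normal_pdf_center m s y : s != 0 ->
  normal_pdf m s y = normal_pdf 0 s (y - m).
Proof. by move=> s0; rewrite !normal_pdfE // /normal_fun subr0. Qed.

End normal_cdf.

Lemma sum_ord2 (V : nmodType) (f : 'I_2 -> V) : \sum_(i < 2) f i = f 0 + f 1.
Proof. by rewrite big_ord_recl big_ord1; congr (_ + f _); apply/val_inj. Qed.

Lemma det_mx2 (R : comRingType) (A : 'M[R]_2) :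
  \det A = A 0 0 * A 1 1 - A 0 1 * A 1 0.
Proof.
rewrite (expand_det_row _ 0) sum_ord2 /cofactor !det_mx11 !mxE /=.
have -> : lift 0 0 = 1 :> 'I_2 by apply/val_inj.
have -> : lift 1 0 = 0 :> 'I_2 by apply/val_inj.
by rewrite expr0 expr1 mul1r mulN1r mulrN.
Qed.

Lemma quad_invmx2 (R : fieldType) (A : 'M[R]_2) (v : 'rV[R]_2) : \det A != 0 ->
  (v *m invmx A *m v^T) 0 0 =
  (A 1 1 * v 0 0 ^+ 2 - (A 0 1 + A 1 0) * v 0 0 * v 0 1 + A 0 0 * v 0 1 ^+ 2)
    / \det A.
Proof.
move=> dA; rewrite /invmx unitmxE unitfE dA /= !mxE sum_ord2 !mxE !sum_ord2 !mxE.
rewrite /cofactor !det_mx11 !mxE.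
have -> : lift 0 0 = 1 :> 'I_2 by apply/val_inj.
have -> : lift 1 0 = 0 :> 'I_2 by apply/val_inj.
by rewrite /= expr0 expr1 !mul1r (_ : (1 + 1)%N = 2)// expr2; field.
Qed.

Lemma eigenvalue_mx2 (R : fieldType) (S : 'M[R]_2) (l x y : R) :
  (x != 0) || (y != 0) ->
  l * x = x * S 0 0 + y * S 1 0 -> l * y = x * S 0 1 + y * S 1 1 ->
  eigenvalue S l.
Proof.
move=> xy_neq0 e0 e1; apply/eigenvalueP.
exists (\row_(i < 2) (if i == 0 then x else y)).
  apply/rowP => j; rewrite !mxE sum_ord2 !mxE /=.
  have [->|->] : j = 0 \/ j = 1 by case: j => -[|[|//]] ?; [left|right]; exact/val_inj.
  - by rewrite e0.
  - by rewrite e1.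
apply: contraTneq xy_neq0 => /rowP v0.
by move: (v0 0) (v0 1); rewrite !mxE /= => -> ->; rewrite eqxx.
Qed.

Lemma eigenvalue_sym_mx2 (R : fieldType) (S : 'M[R]_2) l :
  S 1 0 = S 0 1 -> l ^+ 2 - (S 0 0 + S 1 1) * l + \det S = 0 -> eigenvalue S l.
Proof.
rewrite det_mx2 => S10 char_l; have [b0|b0] := eqVneq (S 0 1) 0.
  have : (l - S 0 0) * (l - S 1 1) = 0 by rewrite -char_l b0; ring.
  move/eqP; rewrite mulf_eq0 !subr_eq0 => /orP[]/eqP->.
  - by apply: (@eigenvalue_mx2 _ _ _ 1 0); rewrite ?oner_neq0 ?S10 ?b0 //; ring.
  - by apply: (@eigenvalue_mx2 _ _ _ 0 1); rewrite ?oner_neq0 ?orbT ?S10 ?b0 //; ring.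
apply: (@eigenvalue_mx2 _ _ _ (S 0 1) (l - S 0 0)); rewrite ?b0 ?S10 //; first ring.
by apply/eqP; rewrite -subr_eq0 -char_l S10; apply/eqP; ring.
Qed.

Lemma sym_mx2_eigen_bounds (R : rcfType) (S : 'M[R]_2) (lo hi : R) :
  0 < lo -> S 1 0 = S 0 1 -> (forall l, eigenvalue S l -> lo <= l <= hi) ->
  [/\ lo <= S 0 0 <= hi, lo <= S 1 1 <= hi & lo ^+ 2 <= \det S].
Proof.
move=> lo_gt0 S10 eigS; set T := S 0 0 + S 1 1.
pose e := Num.sqrt ((S 0 0 - S 1 1) ^+ 2 + 4 * S 0 1 ^+ 2).
have e2 : e ^+ 2 = (S 0 0 - S 1 1) ^+ 2 + 4 * S 0 1 ^+ 2.
  by rewrite sqr_sqrtr // addr_ge0 ?sqr_ge0 // mulr_ge0 ?sqr_ge0.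
have detE : \det S = (T ^+ 2 - e ^+ 2) / 4 by rewrite det_mx2 S10 e2 /T; field.
have root l : (2 * l - T) ^+ 2 = e ^+ 2 -> lo <= l <= hi.
  move=> hl; apply/eigS/eigenvalue_sym_mx2 => //; rewrite detE.
  by rewrite -hl /T; field.
have /andP[lo_lm lm_hi] : lo <= (T - e) / 2 <= hi.
  by apply: root; rewrite -sqrrN; congr (_ ^+ 2); field.
have /andP[lo_lp lp_hi] : lo <= (T + e) / 2 <= hi.
  by apply: root; congr (_ ^+ 2); field.
have /ler_normlP[] : `|S 0 0 - S 1 1| <= e.
  rewrite /e -sqrtr_sqr ler_sqrt; last by rewrite -e2 sqr_ge0.
  by rewrite lerDl; apply: mulr_ge0 => //; exact: sqr_ge0.
have TE : T = S 0 0 + S 1 1 by [].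
move=> eS eS'; split; try by apply/andP; split; lra.
rewrite detE (_ : (T ^+ 2 - e ^+ 2) / 4 = (T - e) / 2 * ((T + e) / 2)); last by field.
by rewrite expr2 ler_pM // ltW.
Qed.

Lemma cond_threshold_ge (R : realFieldType) (a t beta sig s q rho u : R) :
  a <= 0 -> 0 <= sig -> 0 < s -> 0 < q ->
  t <= - a * s / q -> `|beta| * sig <= rho * s / q ->
  2 * a * sig <= u <= a * sig ->
  a * (1 + 2 * rho) / q <= (- t - beta * u) / s.
Proof.
move=> a_le0 sig_ge0 s_gt0 q_gt0 t_le slope /andP[u_ge u_le].
have asig_le0 : a * sig <= 0 by rewrite mulr_le0_ge0.
have : `|beta * u| <= - 2 * a * (rho * s / q).
  rewrite normrM; apply: (le_trans (y := `|beta| * (- 2 * a * sig))).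
    by apply: ler_wpM2l => //; apply/ler_normlP; split; lra.
  by rewrite mulrCA; apply: ler_wpM2l => //; lra.
move=> /ler_normlP[_ bu]; rewrite ler_pdivlMr //.
have -> : a * (1 + 2 * rho) / q * s = - (- a * s / q) + 2 * a * (rho * s / q).
  by field; rewrite gt_eqF.
lra.
Qed.

Lemma sqrt1Bsqr_invol (R : rcfType) (q : R) :
  0 <= q <= 1 -> Num.sqrt (1 - Num.sqrt (1 - q ^+ 2) ^+ 2) = q.
Proof.
move=> /andP[q_ge0 q_le1]; rewrite sqr_sqrtr ?subr_ge0 ?expr_le1 //.
by rewrite (_ : 1 - (1 - q ^+ 2) = q ^+ 2) ?sqrtr_sqr ?ger0_norm //; ring.
Qed.

Section sym_mx2_spectrum.
Variables (R : rcfType) (S : 'M[R]_2) (lo hi : R).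
Hypotheses (lo_gt0 : 0 < lo) (S10 : S 1 0 = S 0 1)
  (eigS : forall l, eigenvalue S l -> lo <= l <= hi).

Let bounds := sym_mx2_eigen_bounds lo_gt0 S10 eigS.

Let S00_gt0 : 0 < S 0 0.
Proof. by case: bounds => /andP[+ _] _ _; exact: lt_le_trans. Qed.

Let S11_gt0 : 0 < S 1 1.
Proof. by case: bounds => _ /andP[+ _] _; exact: lt_le_trans. Qed.

Let lo_le_hi : lo <= hi.
Proof. by case: bounds => /andP[lo_S00 S00_hi] _ _; exact: le_trans S00_hi. Qed.

Let hi_gt0 : 0 < hi. Proof. exact: lt_le_trans lo_le_hi. Qed.

Let det_gt0 : 0 < \det S.
Proof. by case: bounds => _ _; apply: lt_le_trans; rewrite exprn_gt0. Qed.

Lemma sqrt_schur_mx2_ge : Num.sqrt lo * (lo / hi) <= Num.sqrt (\det S / S 0 0).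
Proof.
have [/andP[_ S00_le] _ lo_det] := bounds.
rewrite -(ger0_norm (ltW (divr_gt0 lo_gt0 hi_gt0))) -sqrtr_sqr -sqrtrM ?(ltW lo_gt0) //.
rewrite ler_sqrt ?divr_ge0 ?(ltW det_gt0) ?(ltW S00_gt0) // ler_pdivlMr //.
rewrite (_ : lo * (lo / hi) ^+ 2 * S 0 0 = lo ^+ 2 * (lo * S 0 0 / hi ^+ 2)); last first.
  by field; rewrite gt_eqF.
apply: le_trans lo_det; rewrite ler_piMr ?sqr_ge0 // ler_pdivrMr ?exprn_gt0 // mul1r.
by rewrite expr2 ler_pM // ltW.
Qed.

Lemma regression_slope_mx2_le : `|S 0 1 / S 0 0| * Num.sqrt (S 0 0) <=
  Num.sqrt (1 - (lo / hi) ^+ 2) * Num.sqrt (\det S / S 0 0) / (lo / hi).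
Proof.
have [/andP[_ S00_le] /andP[_ S11_le] lo_det] := bounds; set q := lo / hi.
have q_gt0 : 0 < q by rewrite divr_gt0.
have q_le1 : q <= 1 by rewrite ler_pdivrMr // mul1r.
have S01_le : S 0 1 ^+ 2 <= hi ^+ 2 - \det S.
  have : S 0 0 * S 1 1 <= hi ^+ 2 by rewrite expr2 ler_pM ?(ltW S00_gt0) ?(ltW S11_gt0).
  by rewrite det_mx2 S10; lra.
have offdiag : S 0 1 ^+ 2 * q ^+ 2 <= (1 - q ^+ 2) * \det S.
  have := ler_wpM2r (sqr_ge0 q) S01_le.
  rewrite (_ : (hi ^+ 2 - \det S) * q ^+ 2 = lo ^+ 2 - \det S * q ^+ 2); last first.
    by rewrite /q; field; rewrite gt_eqF.
  by lra.
(* Opaque [q], so that [exprMn] below does not expand [(lo / hi) ^+ 2]. *)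
clearbody q; rewrite -ler_sqr ?nnegrE ?mulr_ge0 ?invr_ge0 ?sqrtr_ge0 ?(ltW q_gt0) //.
rewrite !exprMn real_normK ?num_real // !sqr_sqrtr ?divr_ge0 ?subr_ge0 ?expr_le1
  ?(ltW q_gt0) ?(ltW S00_gt0) ?(ltW det_gt0) // exprVn.
rewrite (_ : (S 0 1 / S 0 0) ^+ 2 * S 0 0 = S 0 1 ^+ 2 * q ^+ 2 / (S 0 0 * q ^+ 2)).
  rewrite (_ : (1 - q ^+ 2) * (\det S / S 0 0) / q ^+ 2 =
      (1 - q ^+ 2) * \det S / (S 0 0 * q ^+ 2)); last by field; rewrite !gt_eqF.
  by rewrite ler_wpM2r // invr_ge0 mulr_ge0 ?sqr_ge0 ?(ltW S00_gt0).
by field; rewrite !gt_eqF.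
Qed.

End sym_mx2_spectrum.

Section bivariate_normal.
Variables (R : realType) (mu : 'rV[R]_2) (Sigma : 'M[R]_2).
Hypotheses (Sigma10 : Sigma 1 0 = Sigma 0 1) (Sigma00_gt0 : 0 < Sigma 0 0)
  (detSigma_gt0 : 0 < \det Sigma).

Let sd1 := Num.sqrt (Sigma 0 0).
Let sd2_1 := Num.sqrt (\det Sigma / Sigma 0 0).
Let slope := Sigma 0 1 / Sigma 0 0.
Let cond_mean x := mu 0 1 + slope * (x - mu 0 0).

Let sd1_neq0 : sd1 != 0. Proof. by rewrite gt_eqF // sqrtr_gt0. Qed.
Let sd2_1_gt0 : 0 < sd2_1. Proof. by rewrite sqrtr_gt0 divr_gt0. Qed.

Lemma bivariate_normal_pdfE z : bivariate_normal_pdf mu Sigma z =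
  normal_pdf (mu 0 0) sd1 z.1 * normal_pdf (cond_mean z.1) sd2_1 z.2.
Proof.
rewrite /bivariate_normal_pdf !normal_pdfE ?sd1_neq0 ?gt_eqF // /normal_peak /normal_fun.
have -> : ord0 = 0 :> 'I_1 by [].
rewrite quad_invmx2 ?gt_eqF // !mxE /= /sd1 /sd2_1 /cond_mean /slope.
rewrite !sqr_sqrtr ?(ltW Sigma00_gt0) ?divr_ge0 ?(ltW Sigma00_gt0) ?(ltW detSigma_gt0) //.
have detE : \det Sigma = Sigma 0 0 * Sigma 1 1 - Sigma 0 1 ^+ 2.
  by rewrite det_mx2 Sigma10 expr2.
rewrite mulrACA -expRD [RHS]mulrC Sigma10; congr (expR _ * _).
  by rewrite detE; field; rewrite -detE !gt_eqF.
rewrite -invfM -sqrtrM ?mulrn_wge0 ?mulr_ge0 ?pi_ge0 ?(ltW Sigma00_gt0) //.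
have -> : Sigma 0 0 * pi *+ 2 * (\det Sigma / Sigma 0 0 * pi *+ 2) =
    (pi *+ 2) ^+ 2 * \det Sigma by field; rewrite gt_eqF.
by rewrite sqrtrM ?sqr_ge0 // sqrtr_sqr ger0_norm // mulrn_wge0 // pi_ge0.
Qed.

Lemma measurable_bivariate_normal_pdf :
  measurable_fun setT (bivariate_normal_pdf mu Sigma).
Proof.
rewrite (funext bivariate_normal_pdfE); apply: measurable_funM.
  exact: measurableT_comp (measurable_normal_pdf _ _) measurable_fst.
under eq_fun do rewrite normal_pdf_center ?gt_eqF //.
apply: measurableT_comp (measurable_normal_pdf _ _) _.
apply: measurable_funB => //; apply: measurable_funD => //.
by apply: measurable_funM => //; apply: measurable_funB.
Qed.

Let epdf := fun z => (bivariate_normal_pdf mu Sigma z)%:E.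

Lemma fubini_F_bivariate_normal_pdf (A B : set R) : measurable B ->
  fubini_F lebesgue_measure (epdf \_ (A `*` B)) =
  (fun x => (normal_pdf (mu 0 0) sd1 x)%:E * normal_prob (cond_mean x) sd2_1 B)%E \_ A.
Proof.
move=> mB; apply/funext => x; rewrite /fubini_F patchE; case: ifPn => [/set_mem Ax|xNA].
  rewrite /normal_prob -ge0_integralZl //; last 3 first.
  - by apply/measurable_EFinP/measurable_funTS; exact: measurable_normal_pdf.
  - by move=> y _; rewrite lee_fin normal_pdf_ge0.
  - by rewrite lee_fin normal_pdf_ge0.
  rewrite [RHS]integral_mkcond; apply: eq_integral => y _; rewrite !patchE /epdf.
  rewrite bivariate_normal_pdfE EFinM; case: ifPn => [/set_mem [_ By]|].
    by rewrite mem_set.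
  by case: ifPn => // /set_mem By /negP[]; apply/mem_set.
apply: integral0_eq => y _; rewrite patchE; case: ifPn => // /set_mem[/= Ax _].
by move/negP: xNA; rewrite mem_set.
Qed.

Lemma bivariate_normal_prob_quadrant_ge (t1 t2 b1 b2 K : R) :
  b1 <= b2 -> b2 * sd1 <= - t1 -> 0 <= K ->
  (forall u, b1 * sd1 < u <= b2 * sd1 -> K <= Phi ((- t2 - slope * u) / sd2_1)) ->
  (((Phi b2 - Phi b1) * K)%:E <= bivariate_normal_prob mu Sigma
     [set z : R * R | (z.1 <= mu 0 0 - t1)%R /\ (z.2 <= mu 0 1 - t2)%R])%E.
Proof.
move=> b12 b2_le K_ge0 condK.
set A := `]-oo, mu 0 0 - t1]; set B := `]-oo, mu 0 1 - t2].
have -> : [set z | z.1 <= mu 0 0 - t1 /\ z.2 <= mu 0 1 - t2] = [set` A] `*` [set` B].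
  by apply/seteqP; split => z; rewrite /= !in_itv.
have mpdf : measurable_fun setT (epdf \_ ([set` A] `*` [set` B])).
  have mAB : measurable ([set` A] `*` [set` B]) by exact: measurableX.
  apply/(measurable_restrictT _ mAB).
  by apply/measurable_funTS/measurable_EFinP; exact: measurable_bivariate_normal_pdf.
have pdf_ge0 z : (0 <= (epdf \_ ([set` A] `*` [set` B])) z)%E.
  rewrite patchE; case: ifP => // _.
  by rewrite lee_fin bivariate_normal_pdfE mulr_ge0 ?normal_pdf_ge0.
rewrite /bivariate_normal_prob integral_mkcond -/epdf.
rewrite (fubini_tonelli1 (m1 := lebesgue_measure) (m2 := lebesgue_measure) _ mpdf
  pdf_ge0).
pose J := `]mu 0 0 + b1 * sd1, mu 0 0 + b2 * sd1].
have -> : ((Phi b2 - Phi b1) * K)%:E = (\int[lebesgue_measure]_x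
    ((fun x => (K * normal_pdf (mu 0 0) sd1 x)%:E) \_ [set` J]) x)%E.
  rewrite -integral_mkcond; under eq_integral do rewrite EFinM.
  rewrite ge0_integralZl //; last 2 first.
  - by apply: measurable_funTS; apply/measurable_EFinP; exact: measurable_normal_pdf.
  - by move=> y _; rewrite lee_fin normal_pdf_ge0.
  rewrite [X in (_ * X)%E](_ : _ = normal_prob (mu 0 0) sd1 [set` J]) //.
  rewrite normal_prob_itvoc ?sqrtr_gt0 ?lerD2l ?ler_pM2r ?sqrtr_gt0 // -EFinM mulrC.
  by rewrite !(addrC (mu 0 0)) !addrK !mulfK.
apply: ge0_le_integral => //.
- move=> x _; rewrite patchE; case: ifP => // _.
  by rewrite lee_fin mulr_ge0 ?normal_pdf_ge0.
- apply: (measurable_restrictT _ (measurable_itv J)).1.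
  apply: measurable_funTS; apply/measurable_EFinP.
  by apply: measurable_funM => //; exact: measurable_normal_pdf.
- exact: measurable_fun_fubini_tonelli_F.
move=> x _; rewrite patchE; case: ifPn => [/set_mem|_]; last first.
  by apply: integral_ge0 => y _; exact: pdf_ge0.
rewrite /= in_itv /= => /andP[xl xr].
rewrite [X in (_ <= X)%E](_ : _ = ((normal_pdf (mu 0 0) sd1 x)%:E *
    normal_prob (cond_mean x) sd2_1 [set` B])%E); last first.
  have Ax : [set` A] x by rewrite /= in_itv /=; apply: le_trans xr _; rewrite lerD2l.
  (* [exact], not [rewrite]: the goal's [fubini_F] lives on a convertible but
     syntactically different measurable structure on [R]. *)
  have := congr1 (fun F => F x)
    (fubini_F_bivariate_normal_pdf [set` A] (measurable_itv B)).
  by rewrite /= patchE mem_set // => FE; exact: FE.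
rewrite normal_probNy // -EFinM lee_fin mulrC ler_wpM2l ?normal_pdf_ge0 //.
rewrite (_ : mu 0 1 - t2 - cond_mean x = - t2 - slope * (x - mu 0 0)); last first.
  by rewrite /cond_mean; ring.
by apply: condK; apply/andP; split; lra.
Qed.

End bivariate_normal.

Theorem lemma2p10 (R : realType) (n : nat) (c C r : R) (Sigma : 'M[R]_2)
    (mu : 'rV[R]_2) :
  (1 <= n)%N ->
  0 < c -> c <= C ->
  posdef Sigma ->
  (forall lam : R, eigenvalue Sigma lam -> c * n%:R <= lam <= C * n%:R) ->
  1 <= r ->
  let t := r * Num.sqrt n%:R in
  let a := - r / Num.sqrt c in
  let rho0 := Num.sqrt (1 - (c / C) ^+ 2) in
  (((Phi a - Phi (2 * a)) * Phi (a * (1 + 2 * rho0) / Num.sqrt (1 - rho0 ^+ 2)))%:E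
  <= bivariate_normal_prob mu Sigma
       ([set z : R * R | (z.1 <= mu ord0 ord0 - t)%R /\ (z.2 <= mu ord0 1 - t)%R]))%E.
Proof.
move=> n_gt0 c_gt0 le_cC [Ssym _] eigS r_ge1; cbv zeta.
set t := r * _; set a := - r / _; set rho0 := Num.sqrt _.
have S10 : Sigma 1 0 = Sigma 0 1 by rewrite -[in LHS]Ssym mxE.
have lo_gt0 : 0 < c * n%:R by rewrite mulr_gt0 ?ltr0n.
have [/andP[lo_S00 _] _ lo_det] := sym_mx2_eigen_bounds lo_gt0 S10 eigS.
have S00_gt0 : 0 < Sigma 0 0 := lt_le_trans lo_gt0 lo_S00.
have det_gt0 : 0 < \det Sigma by apply: lt_le_trans lo_det; rewrite exprn_gt0.
have qE : c * n%:R / (C * n%:R) = c / C.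
  by rewrite invfM mulrACA divff ?mulr1 // pnatr_eq0 -lt0n.
have := sqrt_schur_mx2_ge lo_gt0 S10 eigS.
have := regression_slope_mx2_le lo_gt0 S10 eigS.
rewrite qE => slope_le sd_ge.
have a_le0 : a <= 0.
  by rewrite /a mulNr oppr_le0 divr_ge0 ?sqrtr_ge0 // (le_trans ler01 r_ge1).
have ta : t = - a * Num.sqrt (c * n%:R).
  by rewrite /t /a sqrtrM ?(ltW c_gt0) //; field; rewrite gt_eqF // sqrtr_gt0.
apply: bivariate_normal_prob_quadrant_ge => //.
- lra.
- by rewrite ta mulNr opprK; apply: ler_wnM2l => //; rewrite ler_sqrt // ltW.
- exact: Phi_ge0.
move=> u /andP[lb ub]; apply: le_Phi.
have C_gt0 : 0 < C := lt_le_trans c_gt0 le_cC.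
rewrite sqrt1Bsqr_invol; last first.
  by rewrite divr_ge0 ?(ltW c_gt0) ?(ltW C_gt0) //= ler_pdivrMr // mul1r.
apply: (cond_threshold_ge a_le0 (sqrtr_ge0 _) _ _ _ slope_le).
- by rewrite sqrtr_gt0 divr_gt0.
- by rewrite divr_gt0.
- by rewrite ta -mulrA ler_wpM2l ?oppr_ge0 // ler_pdivlMr ?divr_gt0.
- by rewrite (ltW lb) ub.
Qed.
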